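(* Let $\mathbf{X}\in\mathbb{R}_+^{L\times N}$, $\lambda\ge0$, $\xi>0$, $\mathbf{H}=\mathbf{1}_K\mathbf{h}^T$ with $\mathbf{h}\in[0,\tfrac12]^N$, and $$\mathcal{O}_\xi(\mathbf{M},\mathbf{A})=\tfrac12\|\mathbf{X}-\mathbf{M}\mathbf{A}\|_{2,1}+\lambda\big\|(\mathbf{A}+\xi)^{\mathbf{1}-\mathbf{H}}\big\|_1 .$$ Let $\mathbf{M}\in\mathbb{R}_+^{L\times K}$, $\mathbf{A}\in\mathbb{R}_+^{K\times N}$ be such that every row of $\mathbf{M}\mathbf{A}-\mathbf{X}$ is nonzero, and let $\mathbf{U}$ be diagonal with $U_{ll}=\tfrac12\|(\mathbf{M}\mathbf{A}-\mathbf{X})^l\|_2^{-1}$. Holding $\mathbf{U}$ fixed, compute $\bar{\mathbf{A}}$ by $$\bar A_{kn}=A_{kn}\frac{(\mathbf{M}^T\mathbf{U}\mathbf{X})_{kn}}{\big(\mathbf{M}^T\mathbf{U}\mathbf{M}\mathbf{A}+\lambda(\mathbf{1}-\mathbf{H})\circ(\mathbf{A}+\xi)^{-\mathbf{H}}\big)_{kn}}$$ and then $\bar{\mathbf{M}}$ by $$\bar M_{lk}=M_{lk}\frac{(\mathbf{U}\mathbf{X}\bar{\mathbf{A}}^T)_{lk}}{(\mathbf{U}\mathbf{M}\bar{\mathbf{A}}\bar{\mathbf{A}}^T)_{lk}}$$ (all denominators assumed positive). Then $\mathcal{O}_\xi(\bar{\mathbf{M}},\bar{\mathbf{A}})\le\mathcal{O}_\xi(\mathbf{M},\mathbf{A})$;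 i.e., the objective is non-increasing under these updating rules.
   Context: For a matrix $\mathbf{Y}$, $\mathbf{y}^l$ denotes its $l$-th row and $\|\mathbf{Y}\|_{2,1}=\sum_l\|\mathbf{y}^l\|_2$. $\|\mathbf{B}\|_1=\sum_{k,n}|B_{kn}|$. $(\mathbf{A}+\xi)^{\mathbf{1}-\mathbf{H}}=[(A_{kn}+\xi)^{1-H_{kn}}]$ and $(\mathbf{A}+\xi)^{-\mathbf{H}}=[(A_{kn}+\xi)^{-H_{kn}}]$ are entrywise powers, $\circ$ is the Hadamard product, $\mathbf{1}$ is the all-ones $K\times N$ matrix and $\mathbf{1}_K$ the all-ones vector of length $K$. $\mathbf{H}$ (the ''guidance map'' replicated over $K$ rows) is held fixed during the update. *)

From Stdlib Require Import Reals Lra Lia Arith.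
Open Scope R_scope.

(* A matrix is represented by its entry function; dimensions are carried
   explicitly and only entries with indices in range are ever read. *)
Definition mat := nat -> nat -> R.

Fixpoint rsum (n : nat) (f : nat -> R) : R :=
  match n with
  | O => 0
  | S m => rsum m f + f m
  end.

Definition matmul (p : nat) (A B : mat) : mat :=
  fun i j => rsum p (fun k => A i k * B k j).

Definition tr (A : mat) : mat := fun i j => A j i.

Definition madd (A B : mat) : mat := fun i j => A i j + B i j.
Definition msub (A B : mat) : mat := fun i j => A i j - B i j.

Definition diagm (u : nat -> R) : mat :=
  fun i j => if Nat.eqb i j then u i else 0.

Definition rownorm (N : nat) (Y : mat) (l : nat) : R :=
  sqrt (rsum N (fun n => Y l n ^ 2)).

Definition norm21 (L N : nat) (Y : mat) : R := rsum L (fun l => rownorm N Y l).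

Definition norm1 (K N : nat) (B : mat) : R := rsum K (fun k => rsum N (fun n => Rabs (B k n))).

Definition Hmap (h : nat -> R) : mat := fun _ n => h n.

Definition objective (L K N : nat) (X : mat) (lam xi : R) (h : nat -> R)
    (M A : mat) : R :=
  / 2 * norm21 L N (msub X (matmul K M A))
  + lam * norm1 K N (fun k n => Rpower (A k n + xi) (1 - Hmap h k n)).

Definition Udiag (K N : nat) (X M A : mat) : nat -> R :=
  fun l => / 2 * / rownorm N (msub (matmul K M A) X) l.

Definition updA (L K N : nat) (X : mat) (lam xi : R) (h : nat -> R)
    (U : nat -> R) (M A : mat) : mat :=
  fun k n =>
    A k n * matmul L (matmul L (tr M) (diagm U)) X k n
    / (matmul L (matmul L (tr M) (diagm U)) (matmul K M A) k n
       + lam * ((1 - Hmap h k n) * Rpower (A k n + xi) (- Hmap h k n))).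

Definition updM (L K N : nat) (X : mat) (U : nat -> R) (M Ab : mat) : mat :=
  fun l k =>
    M l k * matmul N (matmul L (diagm U) X) (tr Ab) l k
    / matmul N (matmul K (matmul L (diagm U) M) Ab) (tr Ab) l k.

(* Majorize-minimize.  With r_l = ||(M A - X)^l||_2 and U_ll = 1 / (2 r_l), the
   tangent bound sqrt q / 2 <= r / 4 + q / (4 r) turns the objective into the
   surrogate  S(M', A') = sum_l r_l / 4 + 1/2 sum_l U_ll ||(X - M' A')^l||^2
   + lambda ||(A' + xi)^(1 - H)||_1,  which majorizes it and touches it at (M, A).
   Since 0 <= 1 - h_n <= 1 the penalty is concave, so replacing it by its tangent
   plane at A leaves a weighted least-squares problem plus a nonnegative linear
   term, and the multiplicative rule decreases that by the Lee-Seung auxiliary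
   function argument (a Cauchy-Schwarz inequality).  The M-update is the same
   rule, row by row, without linear term.  Hence
   O(Mb, Ab) <= S(Mb, Ab) <= S(M, Ab) <= S(M, A) = O(M, A). *)

From Stdlib Require Import Reals Lra Lia Psatz.
Open Scope R_scope.

Lemma rsum_ext n f g :
  (forall i, (i < n)%nat -> f i = g i) -> rsum n f = rsum n g.
Proof.
  induction n as [|n IH]; intros Hfg; simpl; [reflexivity|].
  rewrite IH, (Hfg n); [reflexivity | lia | intros; apply Hfg; lia].
Qed.

Lemma rsum_0 n : rsum n (fun _ => 0) = 0.
Proof. induction n as [|n IH]; simpl; [|rewrite IH]; ring. Qed.

Lemma rsum_add n f g : rsum n (fun i => f i + g i) = rsum n f + rsum n g.
Proof. induction n as [|n IH]; simpl; [|rewrite IH]; ring. Qed.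

Lemma rsum_sub n f g : rsum n (fun i => f i - g i) = rsum n f - rsum n g.
Proof. induction n as [|n IH]; simpl; [|rewrite IH]; ring. Qed.

Lemma rsum_mult_l n c f : rsum n (fun i => c * f i) = c * rsum n f.
Proof. induction n as [|n IH]; simpl; [|rewrite IH]; ring. Qed.

Lemma rsum_swap n m (f : nat -> nat -> R) :
  rsum n (fun i => rsum m (fun j => f i j)) = rsum m (fun j => rsum n (fun i => f i j)).
Proof.
  induction n as [|n IH]; simpl; [now rewrite rsum_0|].
  now rewrite IH, <- rsum_add.
Qed.

Lemma rsum_le n f g :
  (forall i, (i < n)%nat -> f i <= g i) -> rsum n f <= rsum n g.
Proof.
  induction n as [|n IH]; intros Hfg; simpl; [lra|].
  assert (rsum n f <= rsum n g) by (apply IH; intros; apply Hfg; lia).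
  assert (f n <= g n) by (apply Hfg; lia).
  lra.
Qed.

Lemma rsum_ge0 n f : (forall i, (i < n)%nat -> 0 <= f i) -> 0 <= rsum n f.
Proof. intros Hf. rewrite <- (rsum_0 n). now apply rsum_le. Qed.

Lemma rsum_gt0 n f :
  (forall i, (i < n)%nat -> 0 <= f i) -> (exists i, (i < n)%nat /\ 0 < f i) ->
  0 < rsum n f.
Proof.
  induction n as [|n IH]; intros Hf [i [Hi Hfi]]; [lia|simpl].
  assert (0 <= f n) by (apply Hf; lia).
  destruct (Nat.eq_dec i n) as [->|Hin].
  - assert (0 <= rsum n f) by (apply rsum_ge0; intros; apply Hf; lia). lra.
  - assert (0 < rsum n f) by (apply IH; [intros; apply Hf; lia | exists i; split; [lia|easy]]).
    lra.
Qed.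

Lemma rsum_kronecker n i (g : nat -> R) :
  (i < n)%nat -> rsum n (fun j => if Nat.eqb i j then g j else 0) = g i.
Proof.
  induction n as [|n IH]; intros Hi; [lia|simpl].
  destruct (Nat.eqb_spec i n) as [->|Hin].
  - rewrite (rsum_ext n _ (fun _ => 0)), rsum_0; [ring|].
    intros j Hj. destruct (Nat.eqb_spec n j); [lia|easy].
  - rewrite IH by lia. ring.
Qed.

Lemma matmul_diagm_l p u (B : mat) i j :
  (i < p)%nat -> matmul p (diagm u) B i j = u i * B i j.
Proof.
  intros Hi. unfold matmul, diagm.
  rewrite <- (rsum_kronecker p i (fun k => u i * B k j)) by easy.
  apply rsum_ext. intros k _. destruct (Nat.eqb i k); ring.
Qed.

Lemma matmul_diagm_r p u (A : mat) i j :
  (j < p)%nat -> matmul p A (diagm u) i j = A i j * u j.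
Proof.
  intros Hj. unfold matmul, diagm.
  rewrite <- (rsum_kronecker p j (fun k => A i k * u j)) by easy.
  apply rsum_ext. intros k _.
  destruct (Nat.eqb_spec k j), (Nat.eqb_spec j k); subst; try lia; ring.
Qed.

Lemma rsum_weighted_variance n p s :
  rsum n (fun i => rsum n (fun j => p i * p j * (s i - s j) ^ 2)) =
  2 * (rsum n p * rsum n (fun i => p i * s i ^ 2) - rsum n (fun i => p i * s i) ^ 2).
Proof.
  set (P := rsum n p); set (S := rsum n (fun i => p i * s i));
    set (Q := rsum n (fun i => p i * s i ^ 2)).
  transitivity (rsum n (fun i => P * (p i * s i ^ 2) - 2 * S * (p i * s i) + Q * p i)).
  - apply rsum_ext; intros i _.
    replace (P * (p i * s i ^ 2) - 2 * S * (p i * s i) + Q * p i)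
      with (p i * s i ^ 2 * P - 2 * (p i * s i) * S + p i * Q) by ring.
    unfold P, S, Q. rewrite <- !rsum_mult_l, <- rsum_sub, <- rsum_add.
    apply rsum_ext; intros; ring.
  - rewrite rsum_add, rsum_sub, !rsum_mult_l. fold P Q S. ring.
Qed.

Lemma rsum_cauchy_schwarz n p s :
  (forall i, (i < n)%nat -> 0 <= p i) ->
  rsum n (fun i => p i * s i) ^ 2 <= rsum n p * rsum n (fun i => p i * s i ^ 2).
Proof.
  intros Hp.
  assert (Hsum : 0 <= rsum n (fun i => rsum n (fun j => p i * p j * (s i - s j) ^ 2))).
  { apply rsum_ge0; intros i Hi; apply rsum_ge0; intros j Hj.
    pose proof (Hp i Hi); pose proof (Hp j Hj). pose proof (pow2_ge_0 (s i - s j)).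
    apply Rmult_le_pos; [apply Rmult_le_pos|]; easy. }
  rewrite rsum_weighted_variance in Hsum. lra.
Qed.

Section MultiplicativeUpdate.

Variables (P K : nat) (w y a0 c : nat -> R) (G : nat -> nat -> R).

Lemma weighted_sse_expand a :
  rsum P (fun l => w l * (y l - rsum K (fun k => G l k * a k)) ^ 2) =
  rsum P (fun l => w l * (y l - rsum K (fun k => G l k * a0 k)) ^ 2)
  - 2 * rsum K (fun k => (a k - a0 k) *
          rsum P (fun l => w l * G l k * (y l - rsum K (fun j => G l j * a0 j))))
  + rsum P (fun l => w l * rsum K (fun k => G l k * (a k - a0 k)) ^ 2).
Proof.
  assert (Hres : forall l, y l - rsum K (fun k => G l k * a k) =
            (y l - rsum K (fun j => G l j * a0 j)) - rsum K (fun k => G l k * (a k - a0 k))).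
  { intros l.
    rewrite (rsum_ext K (fun k => G l k * a k) (fun k => G l k * a0 k + G l k * (a k - a0 k)))
      by (intros; ring).
    rewrite rsum_add. ring. }
  rewrite (rsum_ext K _ (fun k => rsum P (fun l =>
             w l * (y l - rsum K (fun j => G l j * a0 j)) * (G l k * (a k - a0 k)))))
    by (intros; rewrite <- rsum_mult_l; apply rsum_ext; intros; ring).
  rewrite <- rsum_swap, <- rsum_mult_l, <- rsum_sub, <- rsum_add.
  apply rsum_ext; intros l _. rewrite Hres, rsum_mult_l. ring.
Qed.

Hypothesis w_ge0 : forall l, (l < P)%nat -> 0 <= w l.
Hypothesis G_ge0 : forall l k, (l < P)%nat -> (k < K)%nat -> 0 <= G l k.
Hypothesis a0_ge0 : forall k, (k < K)%nat -> 0 <= a0 k.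

(* Lee-Seung: diag((G^T W G a0)_k / a0_k) dominates G^T W G. *)
Lemma quad_form_le s :
  rsum P (fun l => w l * rsum K (fun k => G l k * (a0 k * s k)) ^ 2) <=
  rsum K (fun k => a0 k * s k ^ 2 *
            rsum P (fun l => w l * G l k * rsum K (fun j => G l j * a0 j))).
Proof.
  transitivity (rsum P (fun l => w l * (rsum K (fun k => G l k * a0 k) *
                                         rsum K (fun k => G l k * a0 k * s k ^ 2)))).
  - apply rsum_le; intros l Hl. apply Rmult_le_compat_l; [now apply w_ge0|].
    rewrite (rsum_ext K (fun k => G l k * (a0 k * s k)) (fun k => G l k * a0 k * s k))
      by (intros; ring).
    apply (rsum_cauchy_schwarz K (fun k => G l k * a0 k)).
    intros k Hk. apply Rmult_le_pos; auto.
  - right. rewrite (rsum_ext K _ (fun k => rsum P (fun l =>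
             w l * rsum K (fun j => G l j * a0 j) * (G l k * a0 k * s k ^ 2))))
      by (intros; rewrite <- rsum_mult_l; apply rsum_ext; intros; ring).
    rewrite <- rsum_swap. apply rsum_ext; intros l _.
    rewrite rsum_mult_l. ring.
Qed.

Hypothesis c_ge0 : forall k, (k < K)%nat -> 0 <= c k.

Theorem multiplicative_update_le a :
  let D k := rsum P (fun l => w l * G l k * rsum K (fun j => G l j * a0 j)) + c k in
  (forall k, (k < K)%nat -> 0 < D k) ->
  (forall k, (k < K)%nat -> a k = a0 k * rsum P (fun l => w l * G l k * y l) / D k) ->
  rsum P (fun l => w l * (y l - rsum K (fun k => G l k * a k)) ^ 2) / 2
  + rsum K (fun k => c k * (a k - a0 k))
  <= rsum P (fun l => w l * (y l - rsum K (fun k => G l k * a0 k)) ^ 2) / 2.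
Proof.
  intros D HD Ha.
  pose (B k := rsum P (fun l => w l * G l k * y l)).
  pose (s k := (B k - D k) / D k).
  assert (Hstep : forall k, (k < K)%nat -> a k - a0 k = a0 k * s k).
  { intros k Hk. rewrite Ha by easy. pose proof (HD k Hk). unfold s, B. field. lra. }
  assert (Hgrad : forall k, rsum P (fun l => w l * G l k * (y l - rsum K (fun j => G l j * a0 j)))
                            = B k - (D k - c k)).
  { intros k.
    rewrite (rsum_ext P _ (fun l => w l * G l k * y l
                                   - w l * G l k * rsum K (fun j => G l j * a0 j)))
      by (intros; ring).
    rewrite rsum_sub. unfold B, D. ring. }
  assert (Hcross : rsum K (fun k => (a k - a0 k) *
             rsum P (fun l => w l * G l k * (y l - rsum K (fun j => G l j * a0 j))))
           = rsum K (fun k => c k * (a k - a0 k)) + rsum K (fun k => a0 k * D k * s k ^ 2)).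
  { rewrite <- rsum_add. apply rsum_ext; intros k Hk. rewrite Hgrad, Hstep by easy.
    pose proof (HD k Hk). unfold s. field. lra. }
  assert (Hquad : rsum P (fun l => w l * rsum K (fun k => G l k * (a k - a0 k)) ^ 2)
                  <= 2 * rsum K (fun k => a0 k * D k * s k ^ 2)).
  { rewrite (rsum_ext P _ (fun l => w l * rsum K (fun k => G l k * (a0 k * s k)) ^ 2))
      by (intros l _; do 2 f_equal; apply rsum_ext; intros k Hk; now rewrite Hstep).
    eapply Rle_trans; [apply quad_form_le|].
    rewrite <- rsum_mult_l. apply rsum_le; intros k Hk.
    pose proof (HD k Hk); pose proof (c_ge0 k Hk).
    pose proof (Rmult_le_pos _ _ (a0_ge0 k Hk) (pow2_ge_0 (s k))).
    replace (rsum P _) with (D k - c k) by (unfold D; ring).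
    nra. }
  rewrite weighted_sse_expand with (a := a), Hcross. lra.
Qed.

End MultiplicativeUpdate.

Lemma ln_le_sub_1 x : 0 < x -> ln x <= x - 1.
Proof.
  intros Hx. pose proof (exp_ineq1_le (ln x)) as Hexp. rewrite exp_ln in Hexp by easy. lra.
Qed.

(* Weighted AM-GM; average ln x <= x - 1 at t / m and 1 / m with weights p, 1 - p. *)
Lemma Rpower_le_bernoulli p t : 0 <= p <= 1 -> 0 < t -> Rpower t p <= 1 + p * (t - 1).
Proof.
  intros Hp Ht. set (m := 1 + p * (t - 1)).
  assert (Hm : 0 < m) by (unfold m; nra).
  assert (Hlog : p * ln t <= ln m).
  { pose proof (ln_le_sub_1 (t / m) ltac:(apply Rdiv_lt_0_compat; easy)) as Ht'.
    pose proof (ln_le_sub_1 (/ m) ltac:(now apply Rinv_0_lt_compat)) as Hm'.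
    unfold Rdiv in Ht'. rewrite ln_mult in Ht' by (try apply Rinv_0_lt_compat; easy).
    rewrite ln_Rinv in Ht', Hm' by easy.
    assert (Hzero : p * (t * / m - 1) + (1 - p) * (/ m - 1) = 0) by (unfold m in *; field; lra).
    nra. }
  unfold Rpower. rewrite <- (exp_ln m) by easy.
  destruct (Rle_lt_or_eq_dec _ _ Hlog) as [Hlt|Heq].
  - left. now apply exp_increasing.
  - right. now rewrite Heq.
Qed.

Lemma Rpower_concave_tangent p x y :
  0 <= p <= 1 -> 0 < x -> 0 < y ->
  Rpower y p <= Rpower x p + p * Rpower x (p - 1) * (y - x).
Proof.
  intros Hp Hx Hy.
  assert (Hscale : Rpower y p = Rpower x p * Rpower (y / x) p).
  { rewrite Rpower_mult_distr by (try apply Rdiv_lt_0_compat; easy).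
    f_equal. field. lra. }
  assert (Hpred : Rpower x (p - 1) = Rpower x p / x).
  { unfold Rminus. rewrite Rpower_plus, Rpower_Ropp, Rpower_1 by easy. reflexivity. }
  assert (Hxp : 0 < Rpower x p) by apply exp_pos.
  pose proof (Rpower_le_bernoulli p (y / x) Hp ltac:(apply Rdiv_lt_0_compat; easy)).
  rewrite Hscale, Hpred.
  replace (Rpower x p + p * (Rpower x p / x) * (y - x))
    with (Rpower x p * (1 + p * (y / x - 1))) by (field; lra).
  now apply Rmult_le_compat_l; [lra|].
Qed.

(* The tangent of the concave function q |-> sqrt q / 2 at q = s^2. *)
Lemma half_sqrt_le_tangent s q :
  0 < s -> 0 <= q -> / 2 * sqrt q <= s / 4 + / 2 * / s * q / 2.
Proof.
  intros Hs Hq. rewrite <- (pow2_sqrt q) at 2 by easy.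
  replace (s / 4 + / 2 * / s * sqrt q ^ 2 / 2)
    with (/ 2 * sqrt q + (sqrt q - s) ^ 2 * / (4 * s)) by (field; lra).
  pose proof (pow2_ge_0 (sqrt q - s)).
  assert (0 < / (4 * s)) by (apply Rinv_0_lt_compat; lra).
  nra.
Qed.

Lemma half_sqrt_tangent_eq s : 0 < s -> / 2 * sqrt (s ^ 2) = s / 4 + / 2 * / s * s ^ 2 / 2.
Proof. intros Hs. rewrite sqrt_pow2 by lra. field. lra. Qed.

Definition row_sse (K N : nat) (X M A : mat) (l : nat) : R :=
  rsum N (fun n => (X l n - rsum K (fun k => M l k * A k n)) ^ 2).

Definition wsse (L K N : nat) (X : mat) (u : nat -> R) (M A : mat) : R :=
  rsum L (fun l => u l * row_sse K N X M A l).

Definition penalty (K N : nat) (xi : R) (h : nat -> R) (A : mat) : R :=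
  rsum K (fun k => rsum N (fun n => Rpower (A k n + xi) (1 - h n))).

(* The majorizer of the objective built from row weights [s]; with
   [s l = ||(M A - X)^l||_2] its weights [/ 2 * / s l] are exactly [Udiag]. *)
Definition surrogate (L K N : nat) (X : mat) (lam xi : R) (h s : nat -> R) (M A : mat) : R :=
  rsum L (fun l => s l / 4) + wsse L K N X (fun l => / 2 * / s l) M A / 2
  + lam * penalty K N xi h A.

Lemma rsum_div n f c : rsum n f / c = rsum n (fun i => f i / c).
Proof. unfold Rdiv. rewrite Rmult_comm, <- rsum_mult_l. apply rsum_ext; intros; ring. Qed.

Lemma row_sse_ge0 K N X M A l : 0 <= row_sse K N X M A l.
Proof. apply rsum_ge0; intros; apply pow2_ge_0. Qed.

Lemma objective_rows L K N X lam xi h M A :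
  objective L K N X lam xi h M A =
  rsum L (fun l => / 2 * sqrt (row_sse K N X M A l)) + lam * penalty K N xi h A.
Proof.
  unfold objective, norm21, norm1, penalty, Hmap. rewrite <- rsum_mult_l. f_equal. f_equal.
  apply rsum_ext; intros k _. apply rsum_ext; intros n _.
  apply Rabs_pos_eq, Rlt_le, exp_pos.
Qed.

Lemma surrogate_rows L K N X lam xi h s M A :
  surrogate L K N X lam xi h s M A =
  rsum L (fun l => s l / 4 + / 2 * / s l * row_sse K N X M A l / 2) + lam * penalty K N xi h A.
Proof. unfold surrogate, wsse. now rewrite rsum_div, <- rsum_add. Qed.

Lemma objective_le_surrogate L K N X lam xi h s M A :
  (forall l, (l < L)%nat -> 0 < s l) ->
  objective L K N X lam xi h M A <= surrogate L K N X lam xi h s M A.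
Proof.
  intros Hs. rewrite objective_rows, surrogate_rows.
  apply Rplus_le_compat_r, rsum_le; intros l Hl.
  apply half_sqrt_le_tangent; [now apply Hs | apply row_sse_ge0].
Qed.

Lemma rownorm_residual_sq K N X M A l :
  rownorm N (msub (matmul K M A) X) l ^ 2 = row_sse K N X M A l.
Proof.
  unfold rownorm. rewrite pow2_sqrt by (apply rsum_ge0; intros; apply pow2_ge_0).
  apply rsum_ext; intros. unfold msub, matmul. ring.
Qed.

Lemma objective_eq_surrogate L K N X lam xi h M A :
  let s := rownorm N (msub (matmul K M A) X) in
  (forall l, (l < L)%nat -> 0 < s l) ->
  objective L K N X lam xi h M A = surrogate L K N X lam xi h s M A.
Proof.
  intros s Hs. rewrite objective_rows, surrogate_rows. f_equal.
  apply rsum_ext; intros l Hl. unfold s. rewrite <- rownorm_residual_sq.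
  now apply half_sqrt_tangent_eq, Hs.
Qed.

Lemma rownorm_pos N Y l :
  (exists n, (n < N)%nat /\ Y l n <> 0) -> 0 < rownorm N Y l.
Proof.
  intros [n [Hn HY]]. apply sqrt_lt_R0, rsum_gt0.
  - intros; apply pow2_ge_0.
  - exists n. split; [easy|]. simpl. rewrite Rmult_1_r. now apply Rsqr_pos_lt.
Qed.

Lemma matmul_tr_diagm L u (M Y : mat) k n :
  matmul L (matmul L (tr M) (diagm u)) Y k n = rsum L (fun l => u l * M l k * Y l n).
Proof.
  unfold matmul at 1. apply rsum_ext; intros l Hl.
  rewrite matmul_diagm_r by easy. unfold tr. ring.
Qed.

Lemma matmul_diagm_tr L N u (Y B : mat) l k :
  (l < L)%nat -> matmul N (matmul L (diagm u) Y) (tr B) l k = rsum N (fun n => u l * B k n * Y l n).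
Proof.
  intros Hl. unfold matmul at 1. apply rsum_ext; intros n _.
  rewrite matmul_diagm_l by easy. unfold tr. ring.
Qed.

Lemma wsse_by_columns L K N X u M A :
  wsse L K N X u M A =
  rsum N (fun n => rsum L (fun l => u l * (X l n - rsum K (fun k => M l k * A k n)) ^ 2)).
Proof.
  unfold wsse, row_sse. rewrite <- rsum_swap.
  apply rsum_ext; intros l _. now rewrite rsum_mult_l.
Qed.

Lemma penalty_le_tangent K N xi h A B :
  0 < xi -> (forall n, (n < N)%nat -> 0 <= h n <= 1) ->
  (forall k n, (k < K)%nat -> (n < N)%nat -> 0 <= A k n) ->
  (forall k n, (k < K)%nat -> (n < N)%nat -> 0 <= B k n) ->
  penalty K N xi h B <= penalty K N xi h A +
    rsum K (fun k => rsum N (fun n => (1 - h n) * Rpower (A k n + xi) (- h n) * (B k n - A k n))).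
Proof.
  intros Hxi Hh HA HB. unfold penalty. rewrite <- rsum_add.
  apply rsum_le; intros k Hk. rewrite <- rsum_add. apply rsum_le; intros n Hn.
  pose proof (Hh n Hn); pose proof (HA k n Hk Hn); pose proof (HB k n Hk Hn).
  replace (- h n) with (1 - h n - 1) by ring.
  replace (B k n - A k n) with (B k n + xi - (A k n + xi)) by ring.
  apply Rpower_concave_tangent; lra.
Qed.

Section UpdateA.

Variables (L K N : nat) (X M A : mat) (lam xi : R) (h u : nat -> R).

Hypothesis X_ge0 : forall l n, (l < L)%nat -> (n < N)%nat -> 0 <= X l n.
Hypothesis lam_ge0 : 0 <= lam.
Hypothesis xi_gt0 : 0 < xi.
Hypothesis h_range : forall n, (n < N)%nat -> 0 <= h n <= 1.
Hypothesis u_ge0 : forall l, (l < L)%nat -> 0 <= u l.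
Hypothesis M_ge0 : forall l k, (l < L)%nat -> (k < K)%nat -> 0 <= M l k.
Hypothesis A_ge0 : forall k n, (k < K)%nat -> (n < N)%nat -> 0 <= A k n.

Let c k n := lam * ((1 - h n) * Rpower (A k n + xi) (- h n)).
Let denom k n := rsum L (fun l => u l * M l k * rsum K (fun j => M l j * A j n)) + c k n.

Hypothesis updA_denominators_gt0 : forall k n, (k < K)%nat -> (n < N)%nat ->
  0 < matmul L (matmul L (tr M) (diagm u)) (matmul K M A) k n
      + lam * ((1 - Hmap h k n) * Rpower (A k n + xi) (- Hmap h k n)).

Lemma denom_gt0 k n : (k < K)%nat -> (n < N)%nat -> 0 < denom k n.
Proof.
  intros Hk Hn. pose proof (updA_denominators_gt0 k n Hk Hn) as Hd.
  now rewrite matmul_tr_diagm in Hd.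
Qed.

Lemma updA_entry k n :
  updA L K N X lam xi h u M A k n = A k n * rsum L (fun l => u l * M l k * X l n) / denom k n.
Proof. unfold updA. now rewrite !matmul_tr_diagm. Qed.

Lemma updA_ge0 k n : (k < K)%nat -> (n < N)%nat -> 0 <= updA L K N X lam xi h u M A k n.
Proof.
  intros Hk Hn. rewrite updA_entry.
  apply Rmult_le_pos; [apply Rmult_le_pos|].
  - now apply A_ge0.
  - apply rsum_ge0; intros l Hl.
    apply Rmult_le_pos; [apply Rmult_le_pos|]; auto.
  - now apply Rlt_le, Rinv_0_lt_compat, denom_gt0.
Qed.

Theorem updA_decreases :
  wsse L K N X u M (updA L K N X lam xi h u M A) / 2
  + lam * penalty K N xi h (updA L K N X lam xi h u M A)
  <= wsse L K N X u M A / 2 + lam * penalty K N xi h A.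
Proof.
  set (Ab := updA L K N X lam xi h u M A).
  assert (Hcols : wsse L K N X u M Ab / 2
                  + rsum N (fun n => rsum K (fun k => c k n * (Ab k n - A k n)))
                  <= wsse L K N X u M A / 2).
  { rewrite !wsse_by_columns, !rsum_div, <- rsum_add. apply rsum_le; intros n Hn.
    apply (multiplicative_update_le L K u (fun l => X l n) (fun k => A k n) (fun k => c k n) M);
      auto.
    - intros k Hk. apply Rmult_le_pos; [easy|]. pose proof (h_range n Hn).
      apply Rmult_le_pos; [lra | apply Rlt_le, exp_pos].
    - intros k Hk. now apply denom_gt0.
    - intros k Hk. apply updA_entry. }
  assert (Hpen : lam * penalty K N xi h Ab <= lam * penalty K N xi h A
                 + rsum N (fun n => rsum K (fun k => c k n * (Ab k n - A k n)))).
  { rewrite rsum_swap.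
    replace (rsum K _) with (lam * rsum K (fun k => rsum N (fun n =>
               (1 - h n) * Rpower (A k n + xi) (- h n) * (Ab k n - A k n)))).
    - rewrite <- Rmult_plus_distr_l. apply Rmult_le_compat_l; [easy|].
      apply penalty_le_tangent; auto. intros k n Hk Hn. now apply updA_ge0.
    - rewrite <- rsum_mult_l. apply rsum_ext; intros k _.
      rewrite <- rsum_mult_l. apply rsum_ext; intros n _. unfold c. ring. }
  lra.
Qed.

End UpdateA.

Theorem updM_decreases L K N X u (M Ab : mat) :
  (forall l, (l < L)%nat -> 0 <= u l) ->
  (forall l k, (l < L)%nat -> (k < K)%nat -> 0 <= M l k) ->
  (forall k n, (k < K)%nat -> (n < N)%nat -> 0 <= Ab k n) ->
  (forall l k, (l < L)%nat -> (k < K)%nat ->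
     0 < matmul N (matmul K (matmul L (diagm u) M) Ab) (tr Ab) l k) ->
  wsse L K N X u (updM L K N X u M Ab) Ab <= wsse L K N X u M Ab.
Proof.
  intros Hu HM HAb Hden. apply rsum_le; intros l Hl.
  assert (Hrow : forall B : mat, u l * row_sse K N X B Ab l =
            rsum N (fun n => u l * (X l n - rsum K (fun k => Ab k n * B l k)) ^ 2)).
  { intros B. unfold row_sse. rewrite <- rsum_mult_l.
    apply rsum_ext; intros n _. do 3 f_equal. apply rsum_ext; intros; ring. }
  assert (Hden' : forall k, matmul N (matmul K (matmul L (diagm u) M) Ab) (tr Ab) l k =
            rsum N (fun n => u l * Ab k n * rsum K (fun j => Ab j n * M l j)) + 0).
  { intros k. rewrite Rplus_0_r. unfold matmul at 1. apply rsum_ext; intros n _.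
    unfold matmul at 1, tr.
    rewrite (rsum_ext K _ (fun j => u l * (Ab j n * M l j)))
      by (intros; rewrite matmul_diagm_l by easy; ring).
    rewrite rsum_mult_l. ring. }
  rewrite !Hrow.
  enough (rsum N (fun n => u l * (X l n - rsum K (fun k => Ab k n * updM L K N X u M Ab l k)) ^ 2) / 2
          + rsum K (fun k => 0 * (updM L K N X u M Ab l k - M l k))
          <= rsum N (fun n => u l * (X l n - rsum K (fun k => Ab k n * M l k)) ^ 2) / 2) as Hupd.
  { rewrite (rsum_ext K _ (fun _ => 0)), rsum_0 in Hupd by (intros; ring). lra. }
  apply (multiplicative_update_le N K (fun _ => u l) (fun n => X l n) (fun k => M l k)
           (fun _ => 0) (fun n k => Ab k n)); auto.
  - intros; lra.
  - intros k Hk. rewrite <- Hden'. now apply Hden.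
  - intros k Hk. unfold updM. now rewrite matmul_diagm_tr, Hden'.
Qed.

Theorem theorem2 (L K N : nat) (X M A : mat) (lam xi : R) (h : nat -> R) :
  (forall l n, (l < L)%nat -> (n < N)%nat -> 0 <= X l n) ->
  0 <= lam ->
  0 < xi ->
  (forall n, (n < N)%nat -> 0 <= h n <= / 2) ->
  (forall l k, (l < L)%nat -> (k < K)%nat -> 0 <= M l k) ->
  (forall k n, (k < K)%nat -> (n < N)%nat -> 0 <= A k n) ->
  (* every row of M A - X is nonzero *)
  (forall l, (l < L)%nat ->
     exists n, (n < N)%nat /\ msub (matmul K M A) X l n <> 0) ->
  let U := Udiag K N X M A in
  let Ab := updA L K N X lam xi h U M A in
  let Mb := updM L K N X U M Ab in
  (* all denominators positive *)
  (forall k n, (k < K)%nat -> (n < N)%nat ->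
     0 < matmul L (matmul L (tr M) (diagm U)) (matmul K M A) k n
         + lam * ((1 - Hmap h k n) * Rpower (A k n + xi) (- Hmap h k n))) ->
  (forall l k, (l < L)%nat -> (k < K)%nat ->
     0 < matmul N (matmul K (matmul L (diagm U) M) Ab) (tr Ab) l k) ->
  objective L K N X lam xi h Mb Ab <= objective L K N X lam xi h M A.
Proof.
  intros HX Hlam Hxi Hh HM HA Hrow U Ab Mb HdenA HdenM.
  pose (s := rownorm N (msub (matmul K M A) X)).
  assert (Hs : forall l, (l < L)%nat -> 0 < s l) by (intros; now apply rownorm_pos, Hrow).
  assert (Hh' : forall n, (n < N)%nat -> 0 <= h n <= 1)
    by (intros n Hn; pose proof (Hh n Hn); lra).
  assert (HU : forall l, (l < L)%nat -> 0 <= U l).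
  { intros l Hl. pose proof (Hs l Hl). apply Rlt_le, Rmult_lt_0_compat; [lra|].
    now apply Rinv_0_lt_compat. }
  assert (HAb : forall k n, (k < K)%nat -> (n < N)%nat -> 0 <= Ab k n)
    by (intros; eapply updA_ge0; eauto).
  pose proof (updA_decreases L K N X M A lam xi h U HX Hlam Hxi Hh' HU HM HA HdenA) as HstepA.
  pose proof (updM_decreases L K N X U M Ab HU HM HAb HdenM) as HstepM.
  rewrite (objective_eq_surrogate L K N X lam xi h M A Hs).
  apply Rle_trans with (1 := objective_le_surrogate L K N X lam xi h s Mb Ab Hs).
  fold Ab in HstepA. fold Mb in HstepM.
  unfold surrogate. fold s. change (fun l => / 2 * / s l) with U. lra.
Qed.
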